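(* Let $\delta$ be a positive integer, let $$p_\delta(x)=\left(\frac{1+\sqrt{1-4x}}{2}\right)^{\delta+1}+\left(\frac{1-\sqrt{1-4x}}{2}\right)^{\delta+1}$$ (a polynomial in $x$), let $d=\deg p_\delta$ and let $\vartheta_1,\dots,\vartheta_d$ be the roots of $p_\delta$. Then for every positive integer $m$, $$\zeta(m,\delta)=\frac{1}{\delta+1}\sum_{i=1}^{d}\left(\frac{1}{\vartheta_i}\right)^{\lfloor (m+1)/2\rfloor}.$$
   Context: For positive integers $m$ and $\delta$, a $\delta$-deviation set of size $m$ is a finite sequence $(\alpha_1,\dots,\alpha_\ell)$ of positive integers such that (i) $\sum_i\alpha_i=m$; (ii) $\big|\sum_i\alpha_{2i-1}-\sum_i\alpha_{2i}\big|\le 1$; (iii) $\big|\sum_{1\le i\le j}(-1)^{i-1}\alpha_i\big|\le\delta$ for every $j\ge1$; and $\zeta(m,\delta)$ is the number of $\delta$-deviation sets of size $m$. *)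

From mathcomp Require Import all_boot all_order all_algebra all_field.
Set Implicit Arguments. Unset Strict Implicit. Unset Printing Implicit Defensive.
Import Order.TTheory GRing.Theory Num.Theory.

Fixpoint altsum (s : seq nat) : int :=
  if s is a :: s' then (a%:Z - altsum s')%R else 0%R.

(* (i),(ii),(iii) of the definition of a delta-deviation set of size m,
   plus positivity of the entries. *)
Definition deviation_set (m delta : nat) (s : seq nat) : bool :=
  [&& all (fun a => 0 < a) s,
      sumn s == m,
      (`|altsum s| <= 1)%N &
      all (fun j => `|altsum (take j s)| <= delta)%N (iota 1 (size s))].
(* For j > size s, take j s = s, so the condition for such j coincides with
   that for j = size s (and m > 0 forces s nonempty). *)

(* compositions_fuel n m : all sequences of positive integers summing to m
   (when n >= m), each listed once. *)
Fixpoint compositions_fuel (n m : nat) : seq (seq nat) :=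
  if m == 0 then [:: [::]] else
  if n is n'.+1 then
    flatten [seq [seq a :: t | t <- compositions_fuel n' (m - a)] | a <- iota 1 m]
  else [::].

Definition compositions (m : nat) : seq (seq nat) := compositions_fuel m m.

Definition zeta (m delta : nat) : nat := count (deviation_set m delta) (compositions m).

From mathcomp Require Import all_boot all_order all_algebra all_field.
From mathcomp Require Import ring zify.
Import Order.TTheory GRing.Theory Num.Theory.
Set Implicit Arguments. Unset Strict Implicit. Unset Printing Implicit Defensive.

(* Read a deviation set as a walk from height 0 in which a step [a] moves the height [h]
   to [a - h]; [zeta m delta] counts the walks that stay in [|h| <= delta] and end in
   [|h| <= 1].  These counts obey the recursion of the path graph on [-b < y < b],
   [b = delta + 1], with absorbing ends, which is diagonalised by the cosines
   [w_i ^ y + w_i ^ -y], [w_i = z ^ (2i+1)] for a primitive [4b]-th root of unity [z],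
   with eigenvalues [l_i = w_i + w_i^-1].  Summing the spectral expansion gives
   [zeta m delta = b^-1 * \sum_(i < b/2) (l_i ^ 2) ^ ((m+1)/2)].  On the other side,
   [p (A B) = A ^ b + B ^ b] whenever [A + B = 1], so [p] has degree at most [b/2] and
   vanishes at the [b/2] distinct points [1 / l_i ^ 2]: these are exactly its roots. *)

Lemma compositions_fuelS n m : compositions_fuel n.+1 m =
  if m == 0%N then [:: [::]] else
  flatten [seq [seq a :: t | t <- compositions_fuel n (m - a)] | a <- iota 1 m].
Proof. by []. Qed.

Lemma compositions_fuel_stable n m :
  (m <= n)%N -> compositions_fuel n.+1 m = compositions_fuel n m.
Proof.
elim: n m => [|n IHn] m le_mn; first by move: le_mn; rewrite leqn0 => /eqP ->.
rewrite compositions_fuelS [RHS]compositions_fuelS; case: eqP => // _.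
congr flatten; apply/eq_in_map => a; rewrite mem_iota => /andP[a_gt0 a_lt].
by rewrite IHn //; lia.
Qed.

Lemma compositions_fuelE n m : (m <= n)%N -> compositions_fuel n m = compositions m.
Proof.
rewrite /compositions; elim: n => [|n IHn] le_mn.
  by move: le_mn; rewrite leqn0 => /eqP ->.
have [lt_mn|le_nm] := ltnP m n.+1; first by rewrite compositions_fuel_stable ?IHn.
by have -> : n.+1 = m by apply/eqP; rewrite eqn_leq le_mn le_nm.
Qed.

Lemma compositions_rec m : (0 < m)%N ->
  compositions m = flatten [seq [seq a :: t | t <- compositions (m - a)] | a <- iota 1 m].
Proof.
case: m => // m _; rewrite /compositions compositions_fuelS.
congr flatten; apply/eq_in_map => a; rewrite mem_iota => /andP[a_gt0 a_lt].
by rewrite compositions_fuelE //; lia.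
Qed.

Lemma mem_compositions_fuel n m s : s \in compositions_fuel n m ->
  all (fun a => 0 < a)%N s && (sumn s == m).
Proof.
elim: n m s => [|n IHn] m s.
  by rewrite /=; case: eqP => // ->; rewrite inE => /eqP ->.
rewrite compositions_fuelS; case: eqP => [->|_]; first by rewrite inE => /eqP ->.
case/flattenP=> l /mapP[a]; rewrite mem_iota => /andP[a_gt0 a_lt] -> /mapP[t t_in ->].
by case/andP: (IHn _ _ t_in) => t_pos /eqP t_sum /=; rewrite a_gt0 t_pos t_sum /=; apply/eqP; lia.
Qed.

Local Open Scope ring_scope.

Definition bounded_walk (delta : nat) (h : int) (s : seq nat) : bool :=
  all (fun j => `|h - altsum (take j s)| <= delta)%N (iota 1 (size s))
  && (`|h - altsum s| <= 1)%N.

Lemma bounded_walk_cons delta h a s :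
  bounded_walk delta h (a :: s) =
  (`|h - a%:Z| <= delta)%N && bounded_walk delta (a%:Z - h) s.
Proof.
have reflect_height (x : int) : absz (h - (a%:Z - x))%R = absz ((a%:Z - h) - x)%R.
  by rewrite -abszN; congr absz; ring.
rewrite /bounded_walk /= take0 subr0 -andbA reflect_height; congr (_ && _).
by rewrite (iotaDl 1 1) all_map; congr (_ && _); apply: eq_all => j /=; rewrite reflect_height.
Qed.

Definition walk_count (delta m : nat) (h : int) : nat :=
  count (bounded_walk delta h) (compositions m).

Lemma walk_count0 delta h : walk_count delta 0 h = (`|h| <= 1)%N.
Proof. by rewrite /walk_count /compositions /= /bounded_walk /= subr0 addn0. Qed.

Lemma walk_count_rec delta m h : (0 < m)%N ->
  walk_count delta m h =
  (\sum_(1 <= a < m.+1) (`|h - a%:Z| <= delta) * walk_count delta (m - a) (a%:Z - h))%N.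
Proof.
move=> m_gt0; rewrite /walk_count compositions_rec // count_flatten sumnE !big_map.
rewrite /index_iota subn1; apply: eq_bigr => a _; rewrite count_map.
under eq_count => t do rewrite /= bounded_walk_cons.
by case: (`|h - a%:Z| <= delta)%N; rewrite ?mul1n ?mul0n ?count_pred0.
Qed.

Lemma walk_countSS delta m h :
  walk_count delta m.+2 h =
  ((`|h - 1| <= delta) * walk_count delta m.+1 (1 - h) + walk_count delta m.+1 (h - 1))%N.
Proof.
rewrite walk_count_rec // big_ltn // subSS subn0; congr (_ + _).
rewrite (@walk_count_rec _ m.+1) // big_add1; apply: eq_bigr => a _.
have -> : h - a.+1%:Z = (h - 1) - a%:Z by rewrite -addn1 PoszD; ring.
by have -> : a.+1%:Z - h = a%:Z - (h - 1) by rewrite -addn1 PoszD; ring.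
Qed.

Lemma walk_count_below delta m (h : int) :
  h <= - (delta%:Z) -> walk_count delta m.+1 h = 0%N.
Proof.
move=> h_le; rewrite walk_count_rec // big_nat big1 // => a /andP[a_gt0 _].
by have -> : (`|h - a%:Z| <= delta)%N = false by apply/negbTE; lia.
Qed.

Lemma zeta_walk_count m delta : (0 < m)%N -> zeta m delta = walk_count delta m 0.
Proof.
move=> m_gt0; apply: eq_in_count => s /mem_compositions_fuel /andP[s_pos s_sum].
rewrite /deviation_set /bounded_walk s_pos s_sum /= sub0r abszN andbC.
by congr (_ && _); apply: eq_all => j; rewrite sub0r abszN.
Qed.

Lemma prim_root_neq0 (R : idomainType) n (z : R) :
  (0 < n)%N -> n.-primitive_root z -> z != 0.
Proof.
move=> n_gt0 z_prim; apply: contra_eqN (prim_expr_order z_prim) => /eqP ->.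
by rewrite expr0n gtn_eqF // eq_sym oner_eq0.
Qed.

Lemma prim_rootV (R : fieldType) n (z : R) :
  (0 < n)%N -> n.-primitive_root z -> n.-primitive_root z^-1.
Proof.
move=> n_gt0 z_prim; have z_neq0 := prim_root_neq0 n_gt0 z_prim.
have -> : z^-1 = z ^+ n.-1.
  by apply: (mulfI z_neq0); rewrite mulfV // -exprS prednK // prim_expr_order.
by rewrite prim_root_exp_coprime // coprime_sym coprimenP.
Qed.

Lemma prim_root_half (R : idomainType) n (z : R) :
  (0 < n)%N -> (n * 2).-primitive_root z -> z ^+ n = -1.
Proof.
move=> n_gt0 z_prim; have /eqP := prim_expr_order z_prim.
rewrite exprM sqrf_eq1 => /orP[|/eqP //].
by rewrite -(prim_order_dvd z_prim) => /dvdn_leq; lia.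
Qed.

Lemma sum_expr_eq0 (R : fieldType) (q : R) n :
  q != 1 -> q ^+ n = 1 -> \sum_(i < n) q ^+ i = 0.
Proof.
move=> q_neq1 qn1; have /esym/eqP := subrX1 q n.
by rewrite qn1 subrr mulf_eq0 subr_eq0 (negPf q_neq1) => /eqP.
Qed.

Lemma sqr_eqN1_addV (R : fieldType) (x : R) : x ^+ 2 = -1 -> x + x^-1 = 0.
Proof.
move=> x2; have x_neq0 : x != 0.
  by apply: contra_eqN x2 => /eqP->; rewrite expr0n eq_sym oppr_eq0 oner_eq0.
by apply: (mulfI x_neq0); rewrite mulrDr -expr2 x2 divff // addNr mulr0.
Qed.

Lemma sum_symmetric_half (V : nmodType) (F : nat -> V) b :
  (forall i, (i < b)%N -> F (b - 1 - i)%N = F i) -> (odd b -> F b./2 = 0) ->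
  \sum_(i < b) F i = (\sum_(i < b./2) F i) *+ 2.
Proof.
move=> F_sym F_mid; have b_eq := esym (odd_double_half b).
move: (odd b) b./2 b_eq F_sym F_mid => e c -> F_sym F_mid; rewrite mulr2n.
have split_b : (e + c.*2 = c + (c + e))%N by lia.
rewrite split_b big_split_ord /=; congr (_ + _).
have {}F_sym (i : 'I_c) : F (c + (c + e) - 1 - i)%N = F i.
  by rewrite -split_b F_sym //; have := ltn_ord i; lia.
case: e {split_b} F_sym F_mid => /= F_sym F_mid.
  rewrite addn1 big_ord_recl /= addn0 F_mid ?add0r; last by lia.
  rewrite (reindex_inj rev_ord_inj); apply: eq_bigr => i _ /=.
  by rewrite -(F_sym i) /bump /=; congr F; have := ltn_ord i; lia.
rewrite addn0 (reindex_inj rev_ord_inj); apply: eq_bigr => i _ /=.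
by rewrite -(F_sym i); congr F; have := ltn_ord i; lia.
Qed.

Lemma exprS_add_oppr_parity (R : comPzRingType) (x : R) m :
  x ^+ m + x ^+ m.+1 + ((- x) ^+ m + (- x) ^+ m.+1) = (x ^+ 2) ^+ ((m + 1) %/ 2) *+ 2.
Proof.
rewrite !(exprNn x) -[(-1) ^+ m]signr_odd -[(-1) ^+ m.+1]signr_odd /= -exprM.
have [m_odd|m_even] := boolP (odd m); rewrite /= ?expr0 ?expr1 mulN1r mul1r addrACA subrr.
  by rewrite add0r mulr2n (_ : (2 * ((m + 1) %/ 2) = m.+1)%N) //; lia.
by rewrite addr0 mulr2n (_ : (2 * ((m + 1) %/ 2) = m)%N) //; lia.
Qed.

Lemma sum_prim_root_odd_exp (R : fieldType) b (z : R) n :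
  (0 < b)%N -> (4 * b).-primitive_root z -> (n < 2 * b)%N ->
  \sum_(i < 2 * b) (z ^+ (2 * i + 1)) ^+ n = (n == 0)%:R * (2 * b)%:R.
Proof.
move=> b_gt0 z_prim n_lt; have [->|n_gt0] := posnP n.
  by rewrite sumr_const card_ord mul1r.
have expE i : ((2 * i + 1) * n = n + 2 * n * i)%N by lia.
under eq_bigr => i _ do rewrite -exprM expE exprD exprM.
rewrite -mulr_sumr sum_expr_eq0 ?mulr0 ?mul0r //.
  rewrite -(prim_order_dvd z_prim); apply/negP => /dvdn_leq; lia.
rewrite -exprM (_ : (2 * n * (2 * b) = 4 * b * n)%N); last by lia.
by rewrite exprM (prim_expr_order z_prim) expr1n.
Qed.

Definition wroot (R : fieldType) (z : R) (i : nat) : R := z ^+ (2 * i + 1).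

Definition eigval (R : fieldType) (z : R) (i : nat) : R := wroot z i + (wroot z i)^-1.

Definition eigvec (R : fieldType) (z : R) (i : nat) (y : int) : R :=
  wroot z i ^ y + wroot z i ^ (- y).

Definition fourier_count (R : fieldType) (b : nat) (z : R) (n : nat) (y : int) : R :=
  ((4 * b)%:R)^-1 * \sum_(i < 2 * b) eigval z i ^+ n * (1 + eigval z i) * eigvec z i y.

Section FourierCount.

Variables (R : numFieldType) (b : nat) (z : R).
Hypotheses (b_gt0 : (0 < b)%N) (z_prim : (4 * b).-primitive_root z).

Let z_exp2b : z ^+ (2 * b) = -1.
Proof. by apply: prim_root_half; rewrite ?muln_gt0 // (_ : (2 * b * 2 = 4 * b)%N) //; lia. Qed.

Lemma wroot_neq0 i : wroot z i != 0.
Proof. by rewrite expf_neq0 // (prim_root_neq0 _ z_prim) //; lia. Qed.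

Lemma eigvecN i y : eigvec z i (- y) = eigvec z i y.
Proof. by rewrite /eigvec opprK addrC. Qed.

Lemma eigval_eigvec i y :
  eigval z i * eigvec z i y = eigvec z i (y + 1) + eigvec z i (y - 1).
Proof.
rewrite /eigvec /eigval !opprD !opprK !expfzDr ?wroot_neq0 // expr1z exprN1; ring.
Qed.

Lemma fourier_count_rec n y :
  fourier_count b z n.+1 y = fourier_count b z n (y + 1) + fourier_count b z n (y - 1).
Proof.
rewrite /fourier_count -mulrDr -big_split; congr (_ * _); apply: eq_bigr => i _.
by rewrite /= -mulrDr -eigval_eigvec exprS; ring.
Qed.

Lemma fourier_countN n y : fourier_count b z n (- y) = fourier_count b z n y.
Proof. by rewrite /fourier_count; under eq_bigr => i _ do rewrite eigvecN. Qed.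

Lemma sum_wroot_expz (t : int) : (`|t| < 2 * b)%N ->
  \sum_(i < 2 * b) wroot z i ^ t = (t == 0)%:R * (2 * b)%:R.
Proof.
case: t => n /= n_lt; first exact: sum_prim_root_odd_exp.
rewrite -(sum_prim_root_odd_exp b_gt0 (prim_rootV _ z_prim) n_lt) //; last by lia.
by apply: eq_bigr => i _; rewrite /wroot /exprz !exprVn.
Qed.

Lemma eigvec_bound i : eigvec z i b = 0.
Proof.
rewrite /eigvec -invr_expz; apply: sqr_eqN1_addV.
rewrite /wroot /= -!exprM (_ : ((2 * i + 1) * (b * 2) = 2 * b * (2 * i + 1))%N); last by lia.
by rewrite exprM z_exp2b -signr_odd addn1 /= oddM.
Qed.

Lemma fourier_count_bound n : fourier_count b z n b = 0.
Proof. by rewrite /fourier_count big1 ?mulr0 // => i _; rewrite eigvec_bound mulr0. Qed.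

Lemma fourier_count0 (y : int) : (`|y| < b)%N -> fourier_count b z 0 y = (`|y| <= 1)%N%:R.
Proof.
move=> y_lt; rewrite /fourier_count.
under eq_bigr => i _ do rewrite expr0 mul1r mulrDl mul1r eigval_eigvec.
rewrite !big_split /= !sum_wroot_expz ?abszN; try lia.
have twice (x : R) : x * (2 * b)%:R + x * (2 * b)%:R = x * (4 * b)%:R.
  by rewrite -mulrDr -natrD; congr (_ * _%:R); lia.
rewrite !oppr_eq0 !twice -!mulrDl mulrC mulrK ?unitfE ?pnatr_eq0; last by lia.
by case: y y_lt => [[|[|n]]|[|n]] _ /=; rewrite ?addr0 ?add0r.
Qed.

Lemma eigval_shift i : eigval z (b + i) = - eigval z i.
Proof.
have shiftE : wroot z (b + i) = - wroot z i.
  rewrite /wroot (_ : (2 * (b + i) + 1 = 2 * b + (2 * i + 1))%N); last by lia.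
  by rewrite exprD z_exp2b mulN1r.
by rewrite /eigval shiftE invrN opprD.
Qed.

Lemma eigval_rev i : (i < b)%N -> eigval z (b - 1 - i) = - eigval z i.
Proof.
move=> i_lt; have prod_m1 : wroot z (b - 1 - i) * wroot z i = -1.
  by rewrite -exprD (_ : (2 * (b - 1 - i) + 1 + (2 * i + 1) = 2 * b)%N) //; lia.
have revE : wroot z (b - 1 - i) = - (wroot z i)^-1.
  by apply: (mulIf (wroot_neq0 i)); rewrite prod_m1 mulNr mulVf ?wroot_neq0.
by rewrite /eigval revE invrN invrK opprD addrC.
Qed.

Lemma eigval_mid : odd b -> eigval z b./2 = 0.
Proof.
move=> b_odd; apply: sqr_eqN1_addV.
by rewrite -exprM (_ : ((2 * b./2 + 1) * 2 = 2 * b)%N) //; lia.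
Qed.

Lemma fourier_count_closed m : (0 < m)%N ->
  fourier_count b z m.-1 1 = b%:R^-1 * \sum_(i < b./2) (eigval z i ^+ 2) ^+ ((m + 1) %/ 2).
Proof.
move=> m_gt0; rewrite /fourier_count.
have term i :
    eigval z i ^+ m.-1 * (1 + eigval z i) * eigvec z i 1 = eigval z i ^+ m + eigval z i ^+ m.+1.
  by rewrite /eigvec expr1z exprN1 -/(eigval z i) -(prednK m_gt0) !exprS; ring.
under eq_bigr => i _ do rewrite term.
rewrite (_ : (2 * b = b + b)%N) ?big_split_ord /=; last by lia.
under [X in _ + X]eq_bigr => i _ do rewrite eigval_shift.
rewrite -big_split /=; under eq_bigr => i _ do rewrite exprS_add_oppr_parity.
rewrite sumrMnl (sum_symmetric_half (F := fun i => (eigval z i ^+ 2) ^+ ((m + 1) %/ 2))).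
- rewrite -mulrnA -mulr_natl natrM; field; rewrite pnatr_eq0; lia.
- by move=> i i_lt /=; rewrite eigval_rev // sqrrN.
- by move=> b_odd /=; rewrite eigval_mid // expr0n /= expr0n gtn_eqF //; lia.
Qed.

Lemma wroot_sqr_expb i : (wroot z i ^+ 2) ^+ b = -1.
Proof. by rewrite -!exprM mulnC exprM z_exp2b -signr_odd addn1 /= oddM. Qed.

Lemma wroot_sqr_add1_neq0 i : (i < b./2)%N -> 1 + wroot z i ^+ 2 != 0.
Proof.
move=> i_lt; rewrite addrC addr_eq0; apply/eqP => w2.
have /eqP : (wroot z i ^+ 2) ^+ 2 = 1 by rewrite w2 sqrrN expr1n.
by rewrite -!exprM -(prim_order_dvd z_prim) => /dvdn_leq; lia.
Qed.

Lemma eigval_sqr_inj i j : (i < b./2)%N -> (j < b./2)%N ->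
  eigval z i ^+ 2 = eigval z j ^+ 2 -> i = j.
Proof.
move=> i_lt j_lt; have wi := wroot_neq0 i; have wj := wroot_neq0 j.
have sqrE (w : R) : w != 0 -> (w + w^-1) ^+ 2 = w ^+ 2 + (w ^+ 2)^-1 + 2.
  by move=> w0; field.
have inv_sum (a c : R) : a != 0 -> c != 0 -> a + a^-1 = c + c^-1 -> (a - c) * (a * c - 1) = 0.
  move=> a0 c0 ac; transitivity (a * c * ((a + a^-1) - (c + c^-1))).
    by field; rewrite a0 c0.
  by rewrite ac subrr mulr0.
rewrite /eigval !sqrE // => /addIr /(inv_sum _ _ (expf_neq0 2 wi) (expf_neq0 2 wj)) /eqP.
rewrite mulf_eq0 !subr_eq0 /wroot -!exprM => /orP[|].
  by rewrite (eq_prim_root_expr z_prim) !modn_small; lia.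
by rewrite -exprD -(prim_order_dvd z_prim) => /dvdn_leq; lia.
Qed.

Lemma root_inv_eigval_sqr (p : {poly R}) i : (i < b./2)%N ->
  (forall A B : R, A + B = 1 -> p.[A * B] = A ^+ b + B ^+ b) ->
  root p (eigval z i ^+ 2)^-1.
Proof.
move=> i_lt p_vieta; have w0 := wroot_neq0 i; have w2 := wroot_sqr_add1_neq0 i_lt.
have := wroot_sqr_expb i; rewrite /root /eigval; move: (wroot z i) w0 w2 => w w0 w2 w2b.
set A := w ^+ 2 / (1 + w ^+ 2); set B := 1 / (1 + w ^+ 2).
have AB1 : A + B = 1 by rewrite /A /B; field; rewrite w2.
have -> : ((w + w^-1) ^+ 2)^-1 = A * B by rewrite /A /B; field; rewrite ?w0 ?w2.
by rewrite p_vieta // /A /B !expr_div_n w2b expr1n -mulrDl addNr mul0r.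
Qed.

End FourierCount.

Lemma walk_count_fourier (R : numFieldType) delta (z : R) n (h : int) :
  (4 * delta.+1).-primitive_root z -> - (delta%:Z) <= h <= (delta.+1)%:Z ->
  (walk_count delta n.+1 h)%:R = fourier_count delta.+1 z n (h - 1).
Proof.
move=> z_prim; have b_gt0 : (0 < delta.+1)%N by [].
have edge m :
    (walk_count delta m.+1 (- delta%:Z))%:R = fourier_count delta.+1 z m (- delta%:Z - 1).
  rewrite walk_count_below // (_ : - delta%:Z - 1 = - (delta.+1)%:Z); last by lia.
  by rewrite fourier_countN (fourier_count_bound b_gt0 z_prim).
elim: n h => [|n IHn] h /andP[h_ge h_le];
  have [->|h_neq] := eqVneq h (- delta%:Z); rewrite ?edge //;
  have h1_le : (`|h - 1| <= delta)%N by lia.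
  rewrite walk_count_rec // big_nat1 walk_count0 (fourier_count0 b_gt0 z_prim); last by lia.
  by rewrite h1_le mul1n -abszN opprB.
rewrite walk_countSS h1_le mul1n natrD !IHn; try by apply/andP; split; lia.
by rewrite (fourier_count_rec b_gt0 z_prim) subrK (_ : 1 - h - 1 = - h) ?fourier_countN //; ring.
Qed.

Lemma zeta_fourier (R : numFieldType) delta (z : R) m :
  (4 * delta.+1).-primitive_root z -> (0 < m)%N ->
  (zeta m delta)%:R = fourier_count delta.+1 z m.-1 1.
Proof.
move=> z_prim m_gt0; rewrite zeta_walk_count // -{1}(prednK m_gt0).
rewrite (walk_count_fourier _ z_prim) ?sub0r ?fourier_countN //.
by rewrite oppr_le0 /=.
Qed.

Lemma horner_vieta (R : numClosedFieldType) (p : {poly R}) n :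
  (forall x : R,
     p.[x] = ((1 + sqrtC (1 - 4 * x)) / 2) ^+ n + ((1 - sqrtC (1 - 4 * x)) / 2) ^+ n) ->
  forall A B : R, A + B = 1 -> p.[A * B] = A ^+ n + B ^+ n.
Proof.
move=> p_def A B AB1; have -> : B = 1 - A by rewrite -AB1 addrC addKr.
have halfA : (1 + (2 * A - 1)) / 2 = A by field.
have halfB : (1 - (2 * A - 1)) / 2 = 1 - A by field.
have : sqrtC (1 - 4 * (A * (1 - A))) ^+ 2 = (2 * A - 1) ^+ 2 by rewrite sqrtCK; ring.
rewrite p_def; move: (sqrtC _) => s /eqP; rewrite eqf_sqr => /orP[] /eqP ->.
  by rewrite halfA halfB.
by rewrite opprK halfA halfB addrC.
Qed.

(* [(L k, L k.+1)] for [L 0 = 2], [L 1 = 1], [L k.+2 = L k.+1 - X L k]: the recursion of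
   [A ^+ k + B ^+ k] as a polynomial in [A B] when [A + B = 1]. *)
Fixpoint lucas_pair (R : comNzRingType) (k : nat) : {poly R} * {poly R} :=
  if k is k'.+1 then ((lucas_pair R k').2, (lucas_pair R k').2 - (lucas_pair R k').1 * 'X)
  else (2%:P, 1).

Lemma horner_lucas_pair (R : comNzRingType) (A B : R) k : A + B = 1 ->
  ((lucas_pair R k).1).[A * B] = A ^+ k + B ^+ k /\
  ((lucas_pair R k).2).[A * B] = A ^+ k.+1 + B ^+ k.+1.
Proof.
move=> AB1; elim: k => [|k [IH1 IH2]] /=.
  by rewrite hornerC hornerE !expr1 AB1 expr0.
split=> //; rewrite hornerD hornerN hornerMX IH1 IH2 !(exprS A) !(exprS B).
by rewrite -[A * _ + B * _]mul1r -{1}AB1; ring.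
Qed.

Lemma size_lucas_pair (R : comNzRingType) k :
  (size (lucas_pair R k).1 <= k./2 + 1)%N /\ (size (lucas_pair R k).2 <= k.+1./2 + 1)%N.
Proof.
elim: k => [|k [IH1 IH2]] /=.
  by rewrite size_polyC size_poly1; split => //; case: (_ != _).
split=> //; apply: (leq_trans (size_polyD _ _)); rewrite size_polyN geq_max.
have := size_polyMleq (lucas_pair R k).1 'X; rewrite size_polyX => size_mulX.
by apply/andP; split; [apply: (leq_trans IH2) | apply: (leq_trans size_mulX)]; lia.
Qed.

Lemma poly_eq_horner (R : numDomainType) (p q : {poly R}) :
  (forall x, p.[x] = q.[x]) -> p = q.
Proof.
move=> pq; apply/eqP; rewrite -subr_eq0; apply: contraT => pq_neq0.
pose xs : seq R := [seq i%:R | i <- iota 0 (size (p - q))].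
have xs_roots : all (root (p - q)) xs.
  by apply/allP => x _; rewrite /root hornerD hornerN pq subrr.
have xs_uniq : uniq xs by rewrite map_inj_uniq ?iota_uniq // => i j /eqP; rewrite eqr_nat => /eqP.
by have := max_poly_roots pq_neq0 xs_roots xs_uniq; rewrite size_map size_iota ltnn.
Qed.

Lemma vieta_poly_lucas (R : numClosedFieldType) (p : {poly R}) n :
  (forall A B : R, A + B = 1 -> p.[A * B] = A ^+ n + B ^+ n) -> p = (lucas_pair R n).1.
Proof.
move=> p_vieta; apply: poly_eq_horner => x.
pose s := sqrtC (1 - 4 * x); pose A := (1 + s) / 2; pose B := (1 - s) / 2.
have AB1 : A + B = 1 by rewrite /A /B; field.
have ABx : A * B = x.
  rewrite /A /B; transitivity ((1 - s ^+ 2) / 4); first by field.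
  by rewrite sqrtCK; field.
by rewrite -ABx p_vieta // (horner_lucas_pair _ AB1).1.
Qed.

Lemma perm_eq_roots_vieta (R : numClosedFieldType) b (z : R) (p : {poly R}) (rs : seq R) :
  (0 < b)%N -> (4 * b).-primitive_root z ->
  (forall A B : R, A + B = 1 -> p.[A * B] = A ^+ b + B ^+ b) ->
  p = lead_coef p *: \prod_(r <- rs) ('X - r%:P) ->
  perm_eq [seq (eigval z i ^+ 2)^-1 | i <- iota 0 b./2] rs.
Proof.
move=> b_gt0 z_prim p_vieta p_split.
have lc_neq0 : lead_coef p != 0.
  rewrite lead_coef_eq0; apply: contra_eq_neq (p_vieta 1 0 (addr0 1)) => ->.
  by rewrite horner0 expr1n expr0n gtn_eqF // addr0 eq_sym oner_neq0.
set js := [seq _ | i <- _].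
have js_uniq : uniq js.
  rewrite map_inj_in_uniq ?iota_uniq // => i j; rewrite !mem_iota /= => i_lt j_lt /invr_inj.
  exact: (eigval_sqr_inj b_gt0 z_prim i_lt j_lt).
have js_sub : {subset js <= rs}.
  move=> r /mapP[i]; rewrite mem_iota /= => i_lt ->.
  have := root_inv_eigval_sqr b_gt0 z_prim i_lt p_vieta.
  by rewrite {1}p_split rootZ // root_prod_XsubC.
have size_rs : (size rs <= size js)%N.
  have := (size_lucas_pair R b).1; rewrite -(vieta_poly_lucas p_vieta).
  by rewrite {1}p_split size_scale // size_prod_XsubC size_map size_iota; lia.
have [size_js js_rs] := uniq_min_size js_uniq js_sub size_rs.
by rewrite uniq_perm // (uniq_size_uniq js_uniq js_rs) size_js.
Qed.

Theorem theorem3 (delta : nat) (hdelta : (0 < delta)%N)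
  (p : {poly algC})
  (hp : forall x : algC,
      p.[x] = ((1 + sqrtC (1 - 4 * x)) / 2) ^+ delta.+1
            + ((1 - sqrtC (1 - 4 * x)) / 2) ^+ delta.+1)
  (rs : seq algC)
  (hrs : p = lead_coef p *: \prod_(r <- rs) ('X - r%:P))
  (m : nat) (hm : (0 < m)%N) :
  (zeta m delta)%:R
  = (delta.+1)%:R^-1 * \sum_(r <- rs) (r^-1) ^+ ((m + 1) %/ 2).
Proof.
have b_gt0 := ltn0Sn delta; have [z z_prim] := @C_prim_root_exists (4 * delta.+1) isT.
have roots_perm := perm_eq_roots_vieta b_gt0 z_prim (horner_vieta hp) hrs.
rewrite (zeta_fourier z_prim hm) (fourier_count_closed b_gt0 z_prim hm).
rewrite -(perm_big _ roots_perm).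
rewrite big_map -(big_mkord xpredT (fun i => (eigval z i ^+ 2) ^+ ((m + 1) %/ 2))).
by rewrite /index_iota subn0; under [X in _ = _ * X]eq_bigr do rewrite invrK.
Qed.
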